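(* Every LTL-satisfiable $\mathrm{THT}^{1}(\mathsf X,\mathsf R)$ formula has a minimal LTL model. Likewise, every LTL-satisfiable $\mathrm{THT}_1$ formula has a minimal LTL model.
   Context: Fix a finite set $P$ of atomic propositions. Formulas over $P$: $\varphi ::= p \mid \bot \mid \varphi\vee\varphi \mid \varphi\wedge\varphi \mid \varphi\rightarrow\varphi \mid \mathsf{X}\varphi \mid \varphi\,\mathsf{U}\,\varphi \mid \varphi\,\mathsf{R}\,\varphi$, with $\neg\varphi:=\varphi\rightarrow\bot$, and the modalities $\mathsf F\varphi$ and $\mathsf G\varphi$ with the meaning of $\top\mathsf U\varphi$ and $\bot\mathsf R\varphi$. An LTL interpretation is an infinite word $T$ over $2^P$. $T\models_{LTL}\varphi$ denotes standard LTL satisfaction at position $0$ (classical implication). A formula is LTL-satisfiable if it has an LTL model. For LTL interpretations, $H\sqsubset T$ means $H(i)\subseteq T(i)$ for all $i$ and $H\ne T$. A minimal LTL model of $\varphi$ is an LTL model $T$ of $\varphi$ such that no $H\sqsubset T$ satisfies $H\models_{LTL}\varphi$. $\mathrm{THT}^{1}(\mathsf X,\mathsf R)$ is the set of formulas whose only temporal modalities are $\mathsf X$ and $\mathsf R$ and whose implication height (maximal nesting of $\rightarrow$, with negation counting as an implication) is at most $1$. $\mathrm{THT}_1$ is the set of formulas (all modalities $\mathsf X,\mathsf U,\mathsf R,\mathsf F,\mathsf G$ allowed) with no nesting of temporal modalities. *)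

From mathcomp Require Import all_boot.
Set Implicit Arguments. Unset Strict Implicit. Unset Printing Implicit Defensive.

Section LTL.
Variable P : finType.

Inductive form : Type :=
| Atom : P -> form
| Bot : form
| Or : form -> form -> form
| And : form -> form -> form
| Imp : form -> form -> form
| Next : form -> form
| Until : form -> form -> form
| Release : form -> form -> form.

Definition Neg (f : form) : form := Imp f Bot.
Definition Top : form := Imp Bot Bot.
Definition Eventually (f : form) : form := Until Top f.
Definition Always (f : form) : form := Release Bot f.

Definition interp := nat -> {set P}.

(* Standard LTL satisfaction at position i (classical implication). *)
Fixpoint sat (T : interp) (i : nat) (f : form) : Prop :=
  match f with
  | Atom p => p \in T i
  | Bot => False
  | Or a b => sat T i a \/ sat T i b
  | And a b => sat T i a /\ sat T i b
  | Imp a b => sat T i a -> sat T i b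
  | Next a => sat T i.+1 a
  | Until a b => exists k, i <= k /\ sat T k b /\
                   (forall j, i <= j -> j < k -> sat T j a)
  | Release a b => forall k, i <= k ->
                   sat T k b \/ (exists j, i <= j /\ j < k /\ sat T j a)
  end.

Definition models (T : interp) (f : form) : Prop := sat T 0 f.

Definition LTL_satisfiable (f : form) : Prop := exists T, models T f.

Definition strictly_below (H T : interp) : Prop :=
  (forall i, H i \subset T i) /\ ~ (forall i, H i = T i).

Definition minimal_model (f : form) (T : interp) : Prop :=
  models T f /\ forall H, strictly_below H T -> ~ models H f.

(* Implication height; negation counts as an implication since Neg f = Imp f Bot. *)
Fixpoint imp_height (f : form) : nat :=
  match f with
  | Atom _ | Bot => 0
  | Or a b | And a b | Until a b | Release a b => maxn (imp_height a) (imp_height b)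
  | Imp a b => (maxn (imp_height a) (imp_height b)).+1
  | Next a => imp_height a
  end.

Fixpoint only_X_R (f : form) : bool :=
  match f with
  | Atom _ | Bot => true
  | Or a b | And a b | Imp a b | Release a b => only_X_R a && only_X_R b
  | Next a => only_X_R a
  | Until _ _ => false
  end.

Fixpoint temp_depth (f : form) : nat :=
  match f with
  | Atom _ | Bot => 0
  | Or a b | And a b | Imp a b => maxn (temp_depth a) (temp_depth b)
  | Next a => (temp_depth a).+1
  | Until a b | Release a b => (maxn (temp_depth a) (temp_depth b)).+1
  end.

Definition in_THT1_XR (f : form) : Prop := only_X_R f /\ imp_height f <= 1.
Definition in_THT_1 (f : form) : Prop := temp_depth f <= 1.

End LTL.

From mathcomp Require Import all_boot zify.
From Stdlib Require Import Classical ClassicalEpsilon.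
From Stdlib Require Wf_nat.
Set Implicit Arguments. Unset Strict Implicit. Unset Printing Implicit Defensive.

(* Both fragments are handled by a minimisation principle on the set Q of
   models of f.

   For THT^1(X,R), Q is closed under approximation from above: if every
   prefix of H extends to a model lying above H, then H is a model.  Indeed
   antecedents of implications are implication-free, hence monotone, and a
   Release only ever inspects finitely many positions at once.  Choosing
   greedily, at positions 0, 1, 2, ..., a model below the previous one that
   keeps the earlier letters and has the smallest possible letter at the
   current position, the limit of this decreasing chain is a minimal model.

   For THT_1, truth at position 0 depends only on the first K + 1 letters of
   the word, provided K > 0 and every later letter already occurs among them.
   Hence a model may be cut after such a K and continued forever with one of
   its first K + 1 letters.  A model of this eventually constant shape
   minimising first the size of its final letter and then the total size of
   its prefix is minimal: a smaller model either has, after K, a letter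
   smaller than the final one, and can be cut to an eventually constant model
   ending with that letter, or has the same tail and a smaller prefix. *)

Lemma classical_ex_minn (Q : nat -> Prop) :
  (exists n, Q n) -> exists n, Q n /\ forall m, Q m -> n <= m.
Proof.
move=> exQ.
have [n [[Qn n_min] _]] :=
  Wf_nat.dec_inh_nat_subset_has_unique_least_element Q (fun n => classic (Q n)) exQ.
by exists n; split=> // m /n_min /leP.
Qed.

Section MinimalModels.
Variable P : finType.
Implicit Types (f : form P) (H T : interp P) (Q : interp P -> Prop).

Definition subinterp H T := forall j, H j \subset T j.

Definition agree_upto H T K := forall j, j <= K -> H j = T j.

Lemma agree_upto_sym H T K : agree_upto H T K -> agree_upto T H K.
Proof. by move=> HT j /HT. Qed.

Lemma subinterp_card_lt H T i : subinterp H T -> H i != T i -> #|H i| < #|T i|.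
Proof. by move=> HT neq; apply: proper_card; rewrite properEneq neq HT. Qed.

Lemma strictly_below_neq H T : strictly_below H T -> exists i, H i != T i.
Proof. by move=> [_ /not_all_ex_not [i /eqP neq]]; exists i. Qed.

Lemma sat_mono f : imp_height f = 0 ->
  forall H T i, subinterp H T -> sat H i f -> sat T i f.
Proof.
elim: f => [p||a IHa b IHb|a IHa b IHb|a IHa b IHb|a IHa|a IHa b IHb|a IHa b IHb]
  //= h0 H T i HT; try discriminate.
- exact: (subsetP (HT i)).
3: exact: IHa.
all: have [ha hb] : imp_height a = 0 /\ imp_height b = 0 by lia.
- by case=> [Ha|Hb]; [left; exact: IHa HT Ha | right; exact: IHb HT Hb].
- by case=> Ha Hb; split; [exact: IHa HT Ha | exact: IHb HT Hb].
- move=> [k [ik [Hb Ha]]]; exists k; split=> //; split; first exact: IHb HT Hb.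
  by move=> j ij jk; exact: IHa HT (Ha j ij jk).
- move=> HR k ik; case: (HR k ik) => [Hb | [j [ij [jk Ha]]]].
  + by left; apply: IHb HT Hb.
  + by right; exists j; split=> //; split=> //; apply: IHa HT Ha.
Qed.

Definition approx_closed Q := forall H,
  (forall N, exists T, [/\ subinterp H T, agree_upto T H N & Q T]) -> Q H.

Lemma approx_closed_ext Q1 Q2 :
  (forall T, Q1 T <-> Q2 T) -> approx_closed Q1 -> approx_closed Q2.
Proof.
move=> eQ cl H approx; apply/eQ/cl => N.
by have [T [HT TH /eQ QT]] := approx N; exists T.
Qed.

Lemma approx_closed_and Q1 Q2 :
  approx_closed Q1 -> approx_closed Q2 -> approx_closed (fun T => Q1 T /\ Q2 T).
Proof.
move=> cl1 cl2 H approx; split; [apply: cl1 | apply: cl2] => N;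
  by have [T [HT TH [Q1T Q2T]]] := approx N; exists T.
Qed.

(* A disjunct that fails for some prefix length fails for all longer ones. *)
Lemma approx_closed_or Q1 Q2 :
  approx_closed Q1 -> approx_closed Q2 -> approx_closed (fun T => Q1 T \/ Q2 T).
Proof.
move=> cl1 cl2 H approx.
have [all1 | /not_all_ex_not [N1 not1]] :=
  classic (forall N, exists T, [/\ subinterp H T, agree_upto T H N & Q1 T]).
  by left; apply: cl1.
right; apply: cl2 => N; have [T [HT TH [Q1T | Q2T]]] := approx (maxn N N1).
- by case: not1; exists T; split=> // j jN1; apply: TH; lia.
- by exists T; split=> // j jN; apply: TH; lia.
Qed.

Lemma approx_closed_forall (R : nat -> interp P -> Prop) :
  (forall k, approx_closed (R k)) -> approx_closed (fun T => forall k, R k T).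
Proof.
by move=> cl H approx k; apply: cl => N; have [T [HT TH RT]] := approx N; exists T.
Qed.

Lemma approx_closed_imp (A R : interp P -> Prop) :
  (forall H T, subinterp H T -> A H -> A T) -> approx_closed R ->
  approx_closed (fun T => A T -> R T).
Proof.
move=> A_mono cl H approx AH; apply: cl => N.
by have [T [HT TH RT]] := approx N; exists T; split=> //; apply/RT/(A_mono H).
Qed.

Lemma approx_closed_const (c : Prop) : approx_closed (fun _ => c).
Proof. by move=> H approx; have [T [_ _ cT]] := approx 0. Qed.

Lemma approx_closed_ex_lt (R : nat -> interp P -> Prop) k :
  (forall j, approx_closed (R j)) ->
  approx_closed (fun T => exists j, j < k /\ R j T).
Proof.
move=> cl; elim: k => [|k IH].
  by apply: approx_closed_ext (@approx_closed_const False) => T; split=> [|[j []]].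
apply: approx_closed_ext (approx_closed_or IH (cl k)) => T; split.
- by case=> [[j [jk RjT]] | RkT]; [exists j; split=> //; lia | exists k].
- move=> [j [jk RjT]]; case: (ltnP j k) => [jk' | kj]; first by left; exists j.
  by right; have -> : k = j by lia.
Qed.

Lemma approx_closed_sat f : only_X_R f -> imp_height f <= 1 ->
  forall i, approx_closed (fun T => sat T i f).
Proof.
elim: f => [p||a IHa b IHb|a IHa b IHb|a IHa b IHb|a IHa|a IHa b IHb|a IHa b IHb]
  //= XR h1 i.
- by move=> H approx; have [T [_ TH]] := approx i; rewrite -(TH i).
- exact: approx_closed_const.
4: exact: IHa.
all: move/andP: XR => [XRa XRb].
1,2: have [ha hb] : imp_height a <= 1 /\ imp_height b <= 1 by lia.
- exact: approx_closed_or (IHa XRa ha i) (IHb XRb hb i).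
- exact: approx_closed_and (IHa XRa ha i) (IHb XRb hb i).
- have [ha hb] : imp_height a = 0 /\ imp_height b <= 1 by lia.
  by apply: approx_closed_imp; [move=> H T; apply: sat_mono | apply: IHb].
- have [ha hb] : imp_height a <= 1 /\ imp_height b <= 1 by lia.
  apply: approx_closed_forall => k.
  apply: approx_closed_imp => [//|]; apply: approx_closed_or; first exact: IHb.
  apply: approx_closed_ext (approx_closed_ex_lt (k := k)
    (fun j => approx_closed_and (@approx_closed_const (i <= j)) (IHa XRa ha j))).
  by move=> T; split=> [[j [jk [ij aj]]] | [j [ij [jk aj]]]]; exists j.
Qed.

Section GreedyLimit.
Variable Q : interp P -> Prop.
Hypothesis Q_closed : approx_closed Q.
Variable T0 : interp P.
Hypothesis Q_T0 : Q T0.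

Definition refines T n T' :=
  [/\ Q T', subinterp T' T & forall j, j < n -> T' j = T j].

Definition greedy_choice T n T' :=
  refines T n T' /\ forall T'', refines T n T'' -> #|T' n| <= #|T'' n|.

Lemma greedy_choice_exists T n : Q T -> exists T', greedy_choice T n T'.
Proof.
move=> QT.
have [k [[T' [refT' <-]] k_min]] :
    exists k, (exists T', refines T n T' /\ #|T' n| = k) /\
      forall m, (exists T', refines T n T' /\ #|T' n| = m) -> k <= m.
  by apply: classical_ex_minn; exists #|T n|, T; split=> //; split=> // j.
by exists T'; split=> // T'' refT''; apply: k_min; exists T''.
Qed.

Fixpoint greedy n : interp P :=
  if n is n'.+1 then epsilon (inhabits T0) (greedy_choice (greedy n') n') else T0.

Lemma greedy_spec n : Q (greedy n) /\ greedy_choice (greedy n) n (greedy n.+1).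
Proof.
have step m : Q (greedy m) -> greedy_choice (greedy m) m (greedy m.+1).
  by move=> Qm; apply: epsilon_spec; apply: greedy_choice_exists.
elim: n => [|n [Qn choice_n]]; first by split=> //; apply: step.
have Qn1 : Q (greedy n.+1) by case: choice_n => -[].
by split=> //; apply: step.
Qed.

Lemma greedy_decreasing m d :
  subinterp (greedy (m + d)) (greedy m) /\
  forall j, j < m -> greedy (m + d) j = greedy m j.
Proof.
elim: d => [|d [sub agr]]; first by rewrite addn0; split=> // j.
have [[_ sub1 agr1] _] := (greedy_spec (m + d)).2.
rewrite addnS; split=> [j | j jm]; first exact: subset_trans (sub1 j) (sub j).
by rewrite agr1 ?agr //; lia.
Qed.

Definition greedy_limit : interp P := fun j => greedy j.+1 j.

Lemma greedy_limit_agree N j : j < N -> greedy N j = greedy_limit j.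
Proof.
by move=> jN; rewrite -(subnKC jN) (greedy_decreasing j.+1 (N - j.+1)).2.
Qed.

Lemma greedy_limit_sub N : subinterp greedy_limit (greedy N).
Proof.
move=> j; case: (ltnP j N) => [jN | Nj]; first by rewrite greedy_limit_agree.
rewrite /greedy_limit -(subnKC (leqW Nj)); exact: (greedy_decreasing N _).1.
Qed.

Lemma greedy_limit_minimal :
  Q greedy_limit /\ forall H, strictly_below H greedy_limit -> ~ Q H.
Proof.
split.
  apply: Q_closed => N; exists (greedy N.+1); split; first exact: greedy_limit_sub.
  - by move=> j jN; apply: greedy_limit_agree.
  - exact: (greedy_spec N.+1).1.
move=> H HL' QH; have [HL _] := HL'.
have /ex_minnP [i neq i_min] := strictly_below_neq HL'.
have refH : refines (greedy i) i H.
  split=> // [j | j ji]; first exact: subset_trans (HL j) (greedy_limit_sub i j).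
  rewrite greedy_limit_agree //; apply/eqP; apply: contraTT ji => /i_min.
  by rewrite -leqNgt.
have := (greedy_spec i).2.2 H refH.
by rewrite leqNgt (subinterp_card_lt HL neq).
Qed.

End GreedyLimit.

Lemma sat_depth0 f : temp_depth f = 0 ->
  forall H T i j, H i = T j -> sat H i f <-> sat T j f.
Proof.
elim: f => [p||a IHa b IHb|a IHa b IHb|a IHa b IHb|a IHa|a IHa b IHb|a IHa b IHb]
  //= d0 H T i j HT; try discriminate.
- by rewrite HT.
all: have [da db] : temp_depth a = 0 /\ temp_depth b = 0 by lia.
all: by have := IHa da H T i j HT; have := IHb db H T i j HT; tauto.
Qed.

Lemma sat_depth0_agree f H T K j : temp_depth f = 0 ->
  agree_upto H T K -> j <= K -> sat H j f -> sat T j f.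
Proof. by move=> d0 HT /HT /(sat_depth0 d0) []. Qed.

Definition letters_occur_by H K := forall j, K < j -> exists2 i, i <= K & H j = H i.

Lemma letters_occur_by_exists H n : exists2 K, n <= K & letters_occur_by H K.
Proof.
pose witness X := epsilon (inhabits 0) (fun i => H i = X).
exists (maxn n (\max_(X : {set P}) witness X)); first exact: leq_maxl.
move=> j _; exists (witness (H j)).
  by rewrite (leq_trans _ (leq_maxr _ _)) // leq_bigmax.
by apply/esym/(epsilon_spec (inhabits 0) (fun i => H i = H j)); exists j.
Qed.

Lemma letters_occur_by_le H K k :
  letters_occur_by H K -> exists2 i, i <= k /\ i <= K & H k = H i.
Proof.
move=> occH; case: (leqP k K) => [kK | Kk]; first by exists k.
by have [i iK ->] := occH k Kk; exists i; split=> //; lia.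
Qed.

Lemma sat_Until_transfer a b H T K : temp_depth a = 0 -> temp_depth b = 0 ->
  agree_upto H T K -> letters_occur_by H K -> sat H 0 (Until a b) -> sat T 0 (Until a b).
Proof.
move=> da db HT occH /= [k [_ [bk ak]]].
have [i [ik iK] Hki] := letters_occur_by_le k occH.
exists i; split=> //; split.
- exact: sat_depth0_agree db HT iK ((sat_depth0 db Hki).1 bk).
- move=> j _ ji.
  exact: sat_depth0_agree da HT (ltnW (leq_trans ji iK)) (ak j (leq0n j) (leq_trans ji ik)).
Qed.

Lemma sat_Release_transfer a b H T K : temp_depth a = 0 -> temp_depth b = 0 ->
  agree_upto H T K -> letters_occur_by T K -> sat H 0 (Release a b) ->
  sat T 0 (Release a b).
Proof.
move=> da db HT occT /= HR k _.
have [i [ik iK] Tki] := letters_occur_by_le k occT.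
case: (HR i (leq0n i)) => [bi | [j [_ [ji aj]]]].
- by left; apply/(sat_depth0 db Tki); exact: sat_depth0_agree db HT iK bi.
- right; exists j; split=> //; split; first exact: leq_trans ji ik.
  exact: sat_depth0_agree da HT (ltnW (leq_trans ji iK)) aj.
Qed.

Lemma sat_depth1_transfer f H T K : temp_depth f <= 1 -> 0 < K ->
  agree_upto H T K -> letters_occur_by H K -> letters_occur_by T K ->
  sat H 0 f <-> sat T 0 f.
Proof.
elim: f H T => [p||a IHa b IHb|a IHa b IHb|a IHa b IHb|a IHa|a IHa b IHb|a IHa b IHb]
  H T /= d1 K0 HT occH occT.
- by rewrite HT.
- done.
1-3: have [da db] : temp_depth a <= 1 /\ temp_depth b <= 1 by lia.
1-3: by have := IHa H T da K0 HT occH occT; have := IHb H T db K0 HT occH occT; tauto.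
- have da : temp_depth a = 0 by lia.
  exact: (sat_depth0 da (HT 1 K0)).
all: have [da db] : temp_depth a = 0 /\ temp_depth b = 0 by lia.
- split; first exact: sat_Until_transfer da db HT occH.
  exact: sat_Until_transfer da db (agree_upto_sym HT) occT.
- split; first exact: sat_Release_transfer da db HT occT.
  exact: sat_Release_transfer da db (agree_upto_sym HT) occH.
Qed.

Definition cut H K c : interp P := fun j => if j <= K then H j else c.

Lemma models_cut f H K j : temp_depth f <= 1 -> 0 < K -> letters_occur_by H K ->
  j <= K -> models H f -> models (cut H K (H j)) f.
Proof.
move=> d1 K0 occH jK.
have HC : agree_upto H (cut H K (H j)) K by move=> i iK; rewrite /cut iK.
have occC : letters_occur_by (cut H K (H j)) K.
  by move=> i Ki; exists j => //; rewrite /cut leqNgt Ki jK.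
exact: (sat_depth1_transfer d1 K0 HC occH occC).1.
Qed.

Definition const_after H K c := forall j, K < j -> H j = c.

Lemma cut_const_after H K c : const_after (cut H K c) K c.
Proof. by move=> j Kj; rewrite /cut leqNgt Kj. Qed.

Lemma sum_card_lt H T K : strictly_below H T -> (forall j, K < j -> H j = T j) ->
  \sum_(j < K.+1) #|H j| < \sum_(j < K.+1) #|T j|.
Proof.
move=> HT'; have [HT _] := HT'; have [i neq] := strictly_below_neq HT' => tail.
have iK : i < K.+1 by rewrite ltnS leqNgt; apply: (contraNN _ neq) => /tail ->.
rewrite (bigD1 (Ordinal iK)) //= [X in _ < X](bigD1 (Ordinal iK)) //= -addSn.
apply: leq_add; first exact: subinterp_card_lt HT neq.
by apply: leq_sum => j _; apply: subset_leq_card.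
Qed.

Section EventuallyConstant.
Variable Q : interp P -> Prop.
Hypothesis Q_cut : forall H K j,
  0 < K -> letters_occur_by H K -> j <= K -> Q H -> Q (cut H K (H j)).

Lemma Q_cut_after H j : Q H -> exists K, Q (cut H K (H j)).
Proof.
move=> QH; have [K jK occH] := letters_occur_by_exists H (maxn j 1).
by exists K; apply: Q_cut => //; lia.
Qed.

Definition tail_size m := exists H K c, [/\ Q H, const_after H K c & #|c| = m].

Definition prefix_size m s := exists H K c,
  [/\ Q H, const_after H K c, #|c| = m & \sum_(j < K.+1) #|H j| = s].

Lemma eventually_const_minimal T0 :
  Q T0 -> exists H, Q H /\ forall H', strictly_below H' H -> ~ Q H'.
Proof.
move=> QT0.
have [m [[H1 [K1 [c1 [QH1 Hc1 <-]]]] m_min]] :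
    exists m, tail_size m /\ forall m', tail_size m' -> m <= m'.
  apply: classical_ex_minn; have [K QK] := Q_cut_after 0 QT0.
  by exists #|T0 0|, (cut T0 K (T0 0)), K, (T0 0); split=> //; apply: cut_const_after.
have [s [[H [K [c [QH Hc cm <-]]]] s_min]] :
    exists s, prefix_size #|c1| s /\ forall s', prefix_size #|c1| s' -> s <= s'.
  by apply: classical_ex_minn; exists (\sum_(j < K1.+1) #|H1 j|), H1, K1, c1.
exists H; split=> // H' H'H QH'; have [sub _] := H'H.
have [[j Kj neq] | same_tail] := classic (exists2 j, K < j & H' j != c).
- have lt : #|H' j| < #|c|.
    by rewrite -(Hc j Kj); apply: subinterp_card_lt sub _; rewrite (Hc j Kj).
  suff : tail_size #|H' j| by move/m_min; rewrite -cm leqNgt lt.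
  have [K' QK'] := Q_cut_after j QH'.
  by exists (cut H' K' (H' j)), K', (H' j); split=> //; apply: cut_const_after.
- have tail : forall j, K < j -> H' j = H j.
    move=> j Kj; rewrite (Hc j Kj); apply: NNPP => neq; apply: same_tail.
    by exists j => //; apply/eqP.
  suff : prefix_size #|c1| (\sum_(j < K.+1) #|H' j|).
    by move/s_min; rewrite leqNgt (sum_card_lt H'H tail).
  by exists H', K, c; split=> // j Kj; rewrite tail ?Hc.
Qed.

End EventuallyConstant.

End MinimalModels.

Theorem mainTheorem10 (P : finType) :
  (forall f : form P, in_THT1_XR f -> LTL_satisfiable f ->
     exists T, minimal_model f T) /\
  (forall f : form P, in_THT_1 f -> LTL_satisfiable f ->
     exists T, minimal_model f T).
Proof.
split=> f.
- move=> [XR h1] [T0 T0f].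
  exists (greedy_limit (fun T => sat T 0 f) T0).
  exact (greedy_limit_minimal (approx_closed_sat XR h1 (i := 0)) T0f).
- move=> d1 [T0 T0f].
  have Q_cut H K j : 0 < K -> letters_occur_by H K -> j <= K -> models H f ->
      models (cut H K (H j)) f := models_cut d1.
  exact (eventually_const_minimal Q_cut T0f).
Qed.
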